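(* Let $n\ge2$, $l\ge1$, $s\in\{+1,-1\}$ and $i_2,\dots,i_{2l}\in\{0,1\}$ with $0i_2\cdots i_l=i_{l+1}\cdots i_{2l}$ or $0i_2\cdots i_l=\bar i_{l+1}\cdots\bar i_{2l}$. Let $$|\mathscr{G}\rangle=\tfrac{1}{\sqrt2}\Big(|0\rangle\textstyle\bigotimes_{k=2}^{2l}|i_k\rangle+s\,|1\rangle\bigotimes_{k=2}^{2l}|\bar i_k\rangle\Big)$$ and consider $n$ identical copies $|\mathscr{G}\rangle^{\otimes n}$. Perform a projective measurement in the GHZ basis (Bell basis when $n=2$, $l=1$) on the first $l$ qubits of each copy (ordered by copy), and let $|\mathcal{G}_a\rangle$ be the outcome and $|\mathcal{G}_b\rangle$ the state into which the remaining qubits (the last $l$ qubits of each copy, ordered by copy) collapse. If $s=+1$, then $|\mathcal{G}_a\rangle$ and $|\mathcal{G}_b\rangle$ are the same. If $s=-1$, then they are the same when $n$ is even and different when $n$ is odd.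
   Context: For a bit $b$, $\bar b=1-b$. For $N\ge 2$ qubits, the GHZ basis is the orthonormal basis $\frac{1}{\sqrt2}\big(|0\,b_2\cdots b_N\rangle\pm|1\,\bar b_2\cdots\bar b_N\rangle\big)$, $b_k\in\{0,1\}$; for $N=2$ it is the Bell basis. ''Same'' means equal as quantum states (up to a global phase). *)

From HB Require Import structures.
From mathcomp Require Import all_boot all_order all_algebra.
From mathcomp Require Import algC.
Set Implicit Arguments. Unset Strict Implicit. Unset Printing Implicit Defensive.
Import Order.TTheory GRing.Theory Num.Theory.
Local Open Scope ring_scope.

Notation bits N := {ffun 'I_N -> bool}.
(* (Unnormalized) state vectors of N qubits: amplitudes in C^(2^N). *)
Notation qstate N := {ffun bits N -> algC}.

Definition ket N (b : bits N) : qstate N := [ffun x => (x == b)%:R].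
Definition bcompl N (b : bits N) : bits N := [ffun q => ~~ b q].

Definition ghz N (z : bits N) (c : algC) : qstate N :=
  [ffun x => (sqrtC 2)^-1 * (ket z x + c * ket (bcompl z) x)].

(* The GHZ basis: (|0 b2..bN> +- |1 b2bar..bNbar>)/sqrt 2 ; first qubit = index 0 *)
Definition is_ghz_basis_state N (phi : qstate N) : Prop :=
  exists (z : bits N) (c : algC),
    (c = 1 \/ c = -1) /\ (forall q : 'I_N, val q = 0%N -> z q = false) /\
    phi = ghz z c.

(* Block indexing: qubit j of copy k in n copies of m-qubit blocks is k*m+j. *)
Lemma blk_proof n m (k : 'I_n) (j : 'I_m) : (k * m + j < n * m)%N.
Proof.
case: k j => k hk [j hj] /=.
apply: (@leq_trans (k.+1 * m)); first by rewrite mulSn addnC ltn_add2r.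
by rewrite leq_mul2r hk orbT.
Qed.
Definition blk n m (k : 'I_n) (j : 'I_m) : 'I_(n * m) := Ordinal (blk_proof k j).

Lemma unblk_m_pos n m (q : 'I_(n * m)) : (0 < m)%N.
Proof. case: q => q hq; case: m hq => [|m] //; by rewrite muln0. Qed.
Lemma unblk1_proof n m (q : 'I_(n * m)) : (q %/ m < n)%N.
Proof. by rewrite ltn_divLR ?(unblk_m_pos q). Qed.
Lemma unblk2_proof n m (q : 'I_(n * m)) : (q %% m < m)%N.
Proof. by rewrite ltn_pmod ?(unblk_m_pos q). Qed.
Definition unblk1 n m (q : 'I_(n * m)) : 'I_n := Ordinal (unblk1_proof q).
Definition unblk2 n m (q : 'I_(n * m)) : 'I_m := Ordinal (unblk2_proof q).

Definition tpow n M (u : qstate M) : qstate (n * M) :=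
  [ffun x : bits (n * M) => \prod_(k < n) u [ffun j : 'I_M => x (blk k j)]].

(* Reassemble a configuration of the n copies of 2l qubits from the
   configuration a of the first l qubits of each copy (ordered by copy) and
   the configuration b of the last l qubits of each copy (ordered by copy). *)
Definition merge n l (a b : bits (n * l)) : bits (n * (l + l)) :=
  [ffun q : 'I_(n * (l + l)) => match split (unblk2 q) with
             | inl j1 => a (blk (unblk1 q) j1)
             | inr j2 => b (blk (unblk1 q) j2)
             end].

(* Unnormalized collapsed state of register B when register A is found in
   phi:  (<phi| (x) I) |Psi>. *)
Definition collapse n l (Psi : qstate (n * (l + l))) (phi : qstate (n * l))
  : qstate (n * l) :=
  [ffun b : bits (n * l) => \sum_(a : bits (n * l)) (phi a)^* * Psi (merge a b)].

Definition qnormalize N (v : qstate N) : qstate N :=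
  [ffun x => (sqrtC (\sum_y `|v y| ^+ 2))^-1 * v x].

(* equal as quantum states, up to a global phase *)
Definition same_state N (u v : qstate N) : Prop :=
  exists c : algC, `|c| = 1 /\ forall x, u x = c * v x.

From Pilot Require Import Defs.
From HB Require Import structures.
From mathcomp Require Import all_boot all_order all_algebra.
From mathcomp Require Import algC ring.
Set Implicit Arguments. Unset Strict Implicit. Unset Printing Implicit Defensive.
Import Order.TTheory GRing.Theory Num.Theory.
Local Open Scope ring_scope.

(* Write f and g for the two halves of the label i, so that each copy is
   (|f g> + s |f' g'>)/sqrt 2 (primes for complements) and g is f or f'.  An
   outcome (|z> + c |z'>)/sqrt 2 has nonzero probability only if every block of
   z is f or f', say f xor t_k.  Then |z> meets the branches of the copies
   selected by t and |z'> those selected by the negation of t; their amplitudes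
   differ by s^n, so the remaining qubits collapse to a multiple of
   (|w> + c s^n |w'>)/sqrt 2 with w = z or w = z' according as g = f or g = f'.
   Since this state equals c^e (|z> + c s^n |z'>)/sqrt 2 for some e, it is the
   outcome up to a phase iff c s^n = c.  That the first qubits of i and z are
   0 plays no role. *)

Lemma prodr_natb (R : comPzSemiRingType) (I : finType) (P : pred I) :
  \prod_(k : I) (P k)%:R = [forall k, P k]%:R :> R.
Proof.
have [/forallP allP | /forallPn [k /negbTE Pk]] := boolP [forall k, P k].
  by rewrite big1 // => k _; rewrite allP.
by rewrite (bigD1 k) //= Pk mul0r.
Qed.

Lemma sumr_pred1 (R : pzSemiRingType) (I : finType) (j : I) (G : I -> R) :
  \sum_i (i == j)%:R * G i = G j.
Proof.
rewrite (bigD1 j) //= eqxx mul1r big1 ?addr0 // => i /negbTE ->.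
exact: mul0r.
Qed.

Lemma prodr_exp_negb (R : comPzRingType) (a s : R) n (t : 'I_n -> bool) :
  s ^+ 2 = 1 ->
  \prod_(k < n) (a * s ^+ ~~ t k) = s ^+ n * \prod_(k < n) (a * s ^+ t k).
Proof.
move=> s2; rewrite -[n in s ^+ n]card_ord -prodr_const -big_split /=.
apply: eq_bigr => k _; rewrite mulrCA; case: (t k) => /=.
  by rewrite -exprS s2 expr0.
by rewrite expr0 mulr1 expr1.
Qed.

Lemma sign_sqr1 (R : pzRingType) (c : R) : c = 1 \/ c = -1 -> c ^+ 2 = 1.
Proof. by case=> ->; rewrite ?sqrrN expr1n. Qed.

Lemma sqr1_neq0 (R : nzRingType) (c : R) : c ^+ 2 = 1 -> c != 0.
Proof. by apply: contra_eq_neq => ->; rewrite expr0n eq_sym oner_neq0. Qed.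

Lemma sqr1_norm (R : numDomainType) (c : R) : c ^+ 2 = 1 -> `|c| = 1.
Proof. by move=> c2; apply/eqP; rewrite -sqrp_eq1 // -normrX c2 normr1. Qed.

Lemma sqr1_conj (c : algC) : c ^+ 2 = 1 -> c^* = c.
Proof.
by move/eqP; rewrite sqrf_eq1 => /orP [] /eqP ->; rewrite ?rmorphN rmorph1.
Qed.

Lemma unblk1_blk n m (k : 'I_n) (j : 'I_m) : unblk1 (blk k j) = k.
Proof.
have m_gt0 : (0 < m)%N by case: j => j /=; case: m.
by apply: val_inj; rewrite /= divnMDl // divn_small ?addn0.
Qed.

Lemma unblk2_blk n m (k : 'I_n) (j : 'I_m) : unblk2 (blk k j) = j.
Proof. by apply: val_inj; rewrite /= modnMDl modn_small. Qed.

Lemma blk_unblk n m (q : 'I_(n * m)) : blk (unblk1 q) (unblk2 q) = q.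
Proof. by apply: val_inj; rewrite /= -divn_eq. Qed.

Definition block n m (k : 'I_n) (x : bits (n * m)) : bits m :=
  [ffun j => x (blk k j)].

Definition blocks n m (F : 'I_n -> bits m) : bits (n * m) :=
  [ffun q => F (unblk1 q) (unblk2 q)].

Lemma block_blocks n m (F : 'I_n -> bits m) k : block k (blocks F) = F k.
Proof. by apply/ffunP => j; rewrite !ffunE unblk1_blk unblk2_blk. Qed.

Lemma eq_block n m (x y : bits (n * m)) :
  (forall k, block k x = block k y) -> x = y.
Proof.
move=> xy; apply/ffunP => q; rewrite -(blk_unblk q).
by have /ffunP/(_ (unblk2 q)) := xy (unblk1 q); rewrite !ffunE.
Qed.

Lemma eq_blocks n m (x : bits (n * m)) F :
  (x == blocks F) = [forall k, block k x == F k].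
Proof.
apply/eqP/forallP => [-> k | xF]; first by rewrite block_blocks.
by apply: eq_block => k; rewrite block_blocks; apply/eqP.
Qed.

Lemma tpowE n M (u : qstate M) x : tpow n u x = \prod_(k < n) u (block k x).
Proof. by rewrite ffunE. Qed.

Definition lhalf l (y : bits (l + l)) : bits l := [ffun j => y (lshift l j)].
Definition rhalf l (y : bits (l + l)) : bits l := [ffun j => y (rshift l j)].

Lemma eq_halves l (x y : bits (l + l)) :
  (x == y) = (lhalf x == lhalf y) && (rhalf x == rhalf y).
Proof.
apply/eqP/andP => [-> // | [/eqP/ffunP xyL /eqP/ffunP xyR]].
apply/ffunP => q; rewrite -(splitK q).
by case: (split q) => j /=; [have := xyL j | have := xyR j]; rewrite !ffunE.
Qed.

Lemma lhalf_block_merge n l (a b : bits (n * l)) k :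
  lhalf (block k (Defs.merge a b)) = block k a.
Proof.
apply/ffunP => j; rewrite !ffunE unblk1_blk unblk2_blk.
case: splitP => j' /= jj'; first by rewrite (val_inj jj').
by have := ltn_ord j; rewrite jj' ltnNge leq_addr.
Qed.

Lemma rhalf_block_merge n l (a b : bits (n * l)) k :
  rhalf (block k (Defs.merge a b)) = block k b.
Proof.
apply/ffunP => j; rewrite !ffunE unblk1_blk unblk2_blk.
case: splitP => j' /= jj'.
  by have := ltn_ord j'; rewrite -jj' ltnNge leq_addr.
by move/eqP: jj'; rewrite eqn_add2l => /eqP/val_inj ->.
Qed.

Definition bflip N (x : bits N) (t : bool) : bits N := [ffun q => x q (+) t].

Lemma bflip0 N (x : bits N) : bflip x false = x.
Proof. by apply/ffunP => q; rewrite ffunE addbF. Qed.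

Lemma bflipT N (x : bits N) : bflip x true = bcompl x.
Proof. by apply/ffunP => q; rewrite !ffunE addbT. Qed.

Lemma bflipAC N (x : bits N) t u : bflip (bflip x t) u = bflip (bflip x u) t.
Proof. by apply/ffunP => q; rewrite !ffunE addbAC. Qed.

Lemma bcomplK N : involutive (@bcompl N).
Proof. by move=> x; apply/ffunP => q; rewrite !ffunE negbK. Qed.

Lemma bcompl_neq N (x : bits N) : (0 < N)%N -> bcompl x != x.
Proof.
case: N x => // N x _; apply/eqP => /ffunP/(_ ord0).
by rewrite ffunE; case: (x _).
Qed.

Lemma lhalf_bcompl l (y : bits (l + l)) : lhalf (bcompl y) = bcompl (lhalf y).
Proof. by apply/ffunP => j; rewrite !ffunE. Qed.

Lemma rhalf_bcompl l (y : bits (l + l)) : rhalf (bcompl y) = bcompl (rhalf y).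
Proof. by apply/ffunP => j; rewrite !ffunE. Qed.

Lemma block_bcompl n m (x : bits (n * m)) k :
  block k (bcompl x) = bcompl (block k x).
Proof. by apply/ffunP => j; rewrite !ffunE. Qed.

Lemma bflip_blocks n m (F : 'I_n -> bits m) t :
  bflip (blocks F) t = blocks (fun k => bflip (F k) t).
Proof. by apply/ffunP => q; rewrite !ffunE. Qed.

Local Notation isqrt2 := ((sqrtC 2)^-1 : algC).

Lemma isqrt2_ge0 : 0 <= isqrt2.
Proof. by rewrite invr_ge0 sqrtC_ge0 ler0n. Qed.

Lemma isqrt2_neq0 : isqrt2 != 0.
Proof. by rewrite invr_eq0 sqrtC_eq0 pnatr_eq0. Qed.

Lemma ghzE N (z : bits N) c x :
  ghz z c x = isqrt2 * ((x == z)%:R + c * (x == bcompl z)%:R).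
Proof. by rewrite !ffunE. Qed.

Section GhzState.
Variables (N : nat) (z : bits N).
Hypothesis z_neq : bcompl z != z.

Lemma ghz_at c : ghz z c z = isqrt2.
Proof. by rewrite ghzE eqxx eq_sym (negbTE z_neq) mulr0 addr0 mulr1. Qed.

Lemma ghz_at_bcompl c : ghz z c (bcompl z) = isqrt2 * c.
Proof. by rewrite ghzE eqxx (negbTE z_neq) add0r mulr1. Qed.

Lemma ghz_norm c : `|c| = 1 -> \sum_y `|ghz z c y| ^+ 2 = 1.
Proof.
move=> c1; rewrite (bigD1 z) // (bigD1 (bcompl z)) /=; last by rewrite z_neq.
rewrite big1 ?addr0 => [|y /andP [/negbTE yz /negbTE yz']]; last first.
  by rewrite ghzE yz yz' mulr0 addr0 mulr0 normr0 expr0n.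
rewrite ghz_at ghz_at_bcompl normrM c1 mulr1 ger0_norm ?isqrt2_ge0 //.
by rewrite exprVn sqrtCK; field.
Qed.

Lemma ghz_opp_not_same c : c != 0 -> ~ same_state (ghz z (- c)) (ghz z c).
Proof.
move=> c_neq0 [d [_ zc]].
have d1 : d = 1.
  by have := zc z; rewrite !ghz_at -[LHS]mul1r => /(mulIf isqrt2_neq0).
have := zc (bcompl z); rewrite !ghz_at_bcompl d1 mul1r => /eqP.
rewrite mulrN -subr_eq0 -opprD oppr_eq0 -mulr2n mulrn_eq0 /= mulf_eq0.
by rewrite (negbTE isqrt2_neq0) (negbTE c_neq0).
Qed.

End GhzState.

Lemma ghz_bflip N (z : bits N) c e x : c ^+ 2 = 1 ->
  ghz (bflip z e) c x = c ^+ e * ghz z c x.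
Proof.
case: e; rewrite ?bflip0 ?mul1r // bflipT expr1 => c2.
rewrite !ghzE bcomplK mulrCA; congr (_ * _).
by rewrite mulrDr mulrA -expr2 c2 mul1r addrC.
Qed.

Section Copy.
Variables (l : nat) (i : bits (l + l)) (s : algC).
Local Notation f := (lhalf i).
Local Notation g := (rhalf i).

Lemma ghz_halves y : ghz i s y = isqrt2 *
  (((lhalf y == f) && (rhalf y == g))%:R +
   s * ((lhalf y == bcompl f) && (rhalf y == bcompl g))%:R).
Proof. by rewrite ghzE !eq_halves lhalf_bcompl rhalf_bcompl. Qed.

Lemma ghz_lhalf_out y : lhalf y != f -> lhalf y != bcompl f -> ghz i s y = 0.
Proof.
by move=> /negbTE yf /negbTE yf'; rewrite ghz_halves yf yf' mulr0 addr0 mulr0.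
Qed.

Lemma ghz_lhalf_bflip (t : bool) y : (0 < l)%N -> lhalf y = bflip f t ->
  ghz i s y = (rhalf y == bflip g t)%:R * (isqrt2 * s ^+ t).
Proof.
move=> l_gt0 yf; have /negbTE ff := bcompl_neq f l_gt0.
rewrite ghz_halves yf; case: t {yf} => /=.
  by rewrite !bflipT eqxx ff /=; ring.
by rewrite !bflip0 eqxx (eq_sym f) ff /=; ring.
Qed.

Lemma tpow_ghz_merge_out n (a b : bits (n * l)) k :
  block k a != f -> block k a != bcompl f ->
  tpow n (ghz i s) (Defs.merge a b) = 0.
Proof.
move=> af af'; rewrite tpowE (bigD1 k) //=.
by rewrite ghz_lhalf_out ?lhalf_block_merge ?mul0r.
Qed.

Lemma tpow_ghz_merge n (a b : bits (n * l)) (t : 'I_n -> bool) : (0 < l)%N ->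
  (forall k, block k a = bflip f (t k)) ->
  tpow n (ghz i s) (Defs.merge a b) =
  (b == blocks (fun k => bflip g (t k)))%:R * \prod_(k < n) (isqrt2 * s ^+ t k).
Proof.
move=> l_gt0 a_t; rewrite tpowE.
under eq_bigr => k _ do
  rewrite (ghz_lhalf_bflip (t := t k) l_gt0) ?lhalf_block_merge //
          rhalf_block_merge.
by rewrite big_split /= prodr_natb eq_blocks.
Qed.

End Copy.

Lemma collapse_ghz n l (Psi : qstate (n * (l + l))) (z : bits (n * l)) c b :
  collapse Psi (ghz z c) b =
  isqrt2 * (Psi (Defs.merge z b) + c^* * Psi (Defs.merge (bcompl z) b)).
Proof.
have conj_ghz a : (ghz z c a)^* =
    isqrt2 * ((a == z)%:R + c^* * (a == bcompl z)%:R).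
  rewrite ghzE rmorphM rmorphD rmorphM /= !conjC_nat.
  by rewrite conj_Creal ?ger0_real ?isqrt2_ge0.
rewrite ffunE (eq_bigr (fun a => (a == z)%:R * (isqrt2 * Psi (Defs.merge a b)) +
  (a == bcompl z)%:R * (isqrt2 * c^* * Psi (Defs.merge a b)))) => [|a _].
  by rewrite big_split /= !sumr_pred1 mulrDr mulrA.
by rewrite conj_ghz; ring.
Qed.

Section Measurement.
Variables (n l : nat) (i : bits (l + l)) (s : algC).
Hypotheses (l_gt0 : (0 < l)%N) (s2 : s ^+ 2 = 1).
Local Notation f := (lhalf i).
Local Notation g := (rhalf i).
Local Notation Psi := (tpow n (ghz i s)).

Lemma collapse_tpow_ghz_out (z : bits (n * l)) c k :
  block k z != f -> block k z != bcompl f -> collapse Psi (ghz z c) = 0.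
Proof.
move=> zf zf'; apply/ffunP => b; rewrite collapse_ghz.
rewrite (tpow_ghz_merge_out _ _ zf zf') (@tpow_ghz_merge_out _ _ _ _ _ _ k).
- by rewrite mulr0 addr0 mulr0 ffunE.
- by rewrite block_bcompl (can2_eq (@bcomplK _) (@bcomplK _)).
- by rewrite block_bcompl (inj_eq (can_inj (@bcomplK _))).
Qed.

Lemma collapse_tpow_ghz_blocks (t : 'I_n -> bool) c b :
  collapse Psi (ghz (blocks (fun k => bflip f (t k))) c) b =
  \prod_(k < n) (isqrt2 * s ^+ t k) *
  ghz (blocks (fun k => bflip g (t k))) (c^* * s ^+ n) b.
Proof.
have bcompl_blocks_bflip (h : bits l) :
    bcompl (blocks (fun k => bflip h (t k))) =
    blocks (fun k => bflip h (~~ t k)).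
  by apply/ffunP => q; rewrite !ffunE addbN.
rewrite collapse_ghz bcompl_blocks_bflip.
rewrite !(tpow_ghz_merge _ _ l_gt0 (block_blocks _)).
rewrite -bcompl_blocks_bflip (prodr_exp_negb _ t s2) ghzE.
move: (\prod_(k < n) _) => P; ring.
Qed.

Lemma collapse_tpow_ghz (e : bool) (z : bits (n * l)) c :
  g = bflip f e -> c ^+ 2 = 1 -> collapse Psi (ghz z c) != 0 ->
  exists2 k, k != 0 &
    forall b, collapse Psi (ghz z c) b = k * ghz z (c * s ^+ n) b.
Proof.
move=> gf c2 nz.
pose t k := block k z != f.
have z_blocks : z = blocks (fun k => bflip f (t k)).
  apply: eq_block => k; rewrite block_blocks /t.
  have [-> | zf] := eqVneq (block k z) f; first by rewrite bflip0.
  have [-> | zf'] := eqVneq (block k z) (bcompl f); first by rewrite bflipT.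
  by case/eqP: nz; apply: collapse_tpow_ghz_out zf zf'.
have w_bflip : blocks (fun k => bflip g (t k)) = bflip z e.
  apply: eq_block => k.
  by rewrite z_blocks bflip_blocks !block_blocks gf bflipAC.
have cs2 : (c * s ^+ n) ^+ 2 = 1.
  by rewrite exprMn c2 -exprM mulnC exprM s2 expr1n mulr1.
have s_neq0 := sqr1_neq0 s2.
exists (\prod_(k < n) (isqrt2 * s ^+ t k) * (c * s ^+ n) ^+ e).
  rewrite mulf_neq0 ?expf_neq0 ?(sqr1_neq0 cs2) //.
  by apply/prodf_neq0 => k _; rewrite mulf_neq0 ?expf_neq0 ?isqrt2_neq0.
move=> b; rewrite {1}z_blocks collapse_tpow_ghz_blocks sqr1_conj //.
by rewrite w_bflip ghz_bflip // mulrA.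
Qed.

End Measurement.

Lemma same_state_refl N (u : qstate N) : same_state u u.
Proof. by exists 1; split=> [|x]; rewrite ?normr1 ?mul1r. Qed.

Lemma same_state_qnormalize N (v psi phi : qstate N) k : k != 0 ->
  (forall x, v x = k * psi x) -> \sum_y `|psi y| ^+ 2 = 1 ->
  same_state (qnormalize v) phi <-> same_state psi phi.
Proof.
move=> k_neq0 v_psi psi_norm.
have v_norm : \sum_y `|v y| ^+ 2 = `|k| ^+ 2.
  under eq_bigr => y _ do rewrite v_psi normrM exprMn.
  by rewrite -mulr_sumr psi_norm mulr1.
pose u := k / `|k|.
have u_norm : `|u| = 1 by rewrite normrM normfV normr_id divff ?normr_eq0.
have u_neq0 : u != 0 by rewrite -normr_eq0 u_norm oner_neq0.
have v_u x : qnormalize v x = u * psi x.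
  by rewrite ffunE v_norm sqrCK ?normr_ge0 // v_psi mulrA [_ * k]mulrC.
split=> [[d [d_norm v_d]] | [d [d_norm psi_d]]].
  exists (u^-1 * d); split=> [|x].
    by rewrite normrM normfV u_norm invr1 mul1r.
  by rewrite -mulrA -v_d v_u mulKf.
exists (u * d); split=> [|x]; first by rewrite normrM u_norm d_norm mulr1.
by rewrite v_u psi_d mulrA.
Qed.

Unset Implicit Arguments.
Theorem corollary2 (n l : nat) (hn : (2 <= n)%N) (hl : (1 <= l)%N)
  (s : algC) (hs : s = 1 \/ s = -1) (i : bits (l + l))
  (hi0 : forall q : 'I_(l + l), val q = 0%N -> i q = false)
  (hi : (forall j : 'I_l, i (rshift l j) = i (lshift l j)) \/
        (forall j : 'I_l, i (rshift l j) = ~~ i (lshift l j)))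
  (phi : qstate (n * l)) (hphi : is_ghz_basis_state phi)
  (hprob : collapse (tpow n (ghz i s)) phi != 0) :
  (s = 1 -> same_state (qnormalize (collapse (tpow n (ghz i s)) phi)) phi) /\
  (s = -1 ->
     (~~ odd n -> same_state (qnormalize (collapse (tpow n (ghz i s)) phi)) phi) /\
     (odd n -> ~ same_state (qnormalize (collapse (tpow n (ghz i s)) phi)) phi)).
Proof.
move: hphi hprob => [z [c [hc [_ ->]]]] hprob.
have [e gf] : exists e, rhalf i = bflip (lhalf i) e.
  by case: hi => hi; [exists false | exists true];
    apply/ffunP => j; rewrite !ffunE hi ?addbF ?addbT.
have [s2 c2] := (sign_sqr1 hs, sign_sqr1 hc).
have [k k_neq0 collapseE] := collapse_tpow_ghz hl s2 gf c2 hprob.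
have z_neq : bcompl z != z.
  by rewrite bcompl_neq // muln_gt0 hl (leq_trans _ hn).
have cs_norm : `|c * s ^+ n| = 1.
  by rewrite normrM normrX !sqr1_norm // expr1n mulr1.
have same := same_state_qnormalize (ghz z c) k_neq0 collapseE
  (ghz_norm z_neq cs_norm).
split=> [s1 | s_opp].
  by apply/same; rewrite s1 expr1n mulr1; apply: same_state_refl.
split=> [n_even | n_odd].
  apply/same; rewrite s_opp -signr_odd (negbTE n_even) mulr1.
  exact: same_state_refl.
move/same; rewrite s_opp -signr_odd n_odd mulrN1.
exact: ghz_opp_not_same (sqr1_neq0 c2).
Qed.
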